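(* Let $G$ be a connected graph with adjacency matrix $A$ and positive degrees, and let $e=(i,j)$, $i\ne j$, $a_{ij}>0$, be a cut-edge of $G$. Then for every $r>0$, \[ c_r(e)\le r^{-1}. \]
   Context: Graphs are undirected and possibly weighted on vertex set $\{1,\dots,n\}$, with symmetric nonnegative adjacency matrix $A=(a_{k\ell})$; $d=A\mathbf 1$, $D=\mathrm{diag}(d)$, $\|d\|_1=\sum_kd_k$, $D^{\pm1/2}=\mathrm{diag}(d_k^{\pm1/2})$; $e_k$ is the $k$-th column of the identity and $\mathbf 1$ the all-ones vector. The edge $e$ is a cut-edge if deleting it disconnects $G$. With $v=e_i-e_j$ and $\widehat A=A+a_{ij}vv^T$ (deleting edge $e$ and adding loops of weight $a_{ij}$ at $i$ and $j$; $\widehat A\mathbf 1=d$). For $r>0$ and symmetric nonnegative $B$ with $B\mathbf 1=d$, $K_r(B)=\operatorname{Tr}\Big(\big((1+r)I-D^{-1/2}BD^{-1/2}+\tfrac{1}{\|d\|_1}D^{1/2}\mathbf 1\mathbf 1^TD^{1/2}\big)^{-1}\Big)-(1+r)^{-1}$; the regularized score is $c_r(e)=K_r(\widehat A)-K_r(A)$. *)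

From HB Require Import structures.
From mathcomp Require Import all_boot all_order all_algebra.
Set Implicit Arguments. Unset Strict Implicit. Unset Printing Implicit Defensive.
Import Order.TTheory GRing.Theory Num.Theory.
Local Open Scope ring_scope.

Section Defs.
Variables (R : rcfType) (n : nat).

(* weighted undirected graph on 'I_n given by its adjacency matrix *)
Definition symmetric_nonneg (A : 'M[R]_n) : Prop :=
  A^T = A /\ forall k l, 0 <= A k l.

Definition deg (A : 'M[R]_n) (k : 'I_n) : R := \sum_(l < n) A k l.

Definition vol (A : 'M[R]_n) : R := \sum_(k < n) deg A k.

Definition adjrel (A : 'M[R]_n) : rel 'I_n := fun k l => 0 < A k l.

Definition connected_graph (A : 'M[R]_n) : Prop :=
  forall k l : 'I_n, connect (adjrel A) k l.

Definition delete_edge (A : 'M[R]_n) (i j : 'I_n) : 'M[R]_n :=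
  \matrix_(k, l) (if ((k == i) && (l == j)) || ((k == j) && (l == i))
                  then 0 else A k l).

Definition cut_edge (A : 'M[R]_n) (i j : 'I_n) : Prop :=
  ~ connected_graph (delete_edge A i j).

Definition diagf (f : 'I_n -> R) : 'M[R]_n := diag_mx (\row_k f k).

Definition ones : 'cV[R]_n := const_mx 1.

Definition evec (i j : 'I_n) : 'cV[R]_n :=
  \col_k ((k == i)%:R - (k == j)%:R).

Definition Ahat (A : 'M[R]_n) (i j : 'I_n) : 'M[R]_n :=
  A + A i j *: (evec i j *m (evec i j)^T).

Definition Kr (A : 'M[R]_n) (r : R) (B : 'M[R]_n) : R :=
  let Dmh := diagf (fun k => (Num.sqrt (deg A k))^-1) in
  let Dh := diagf (fun k => Num.sqrt (deg A k)) in
  \tr (invmx ((1 + r)%:M - Dmh *m B *m Dmh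
              + (vol A)^-1 *: (Dh *m ones *m ones^T *m Dh)))
  - (1 + r)^-1.

Definition cr (A : 'M[R]_n) (r : R) (i j : 'I_n) : R :=
  Kr A r (Ahat A i j) - Kr A r A.

End Defs.

From HB Require Import structures.
From mathcomp Require Import all_boot all_order all_algebra.
From mathcomp Require Import ring lra.
Set Implicit Arguments. Unset Strict Implicit. Unset Printing Implicit Defensive.
Import Order.TTheory GRing.Theory Num.Theory.
Local Open Scope ring_scope.

(* Write M_r(B) for the matrix inverted in K_r(B).  When B is symmetric, nonnegative
   and has row sums d, the form of D^{-1/2} B D^{-1/2} is bounded by |x|^2 (expand
   sum_{k,l} b_kl (y_k - y_l)^2 >= 0), and the last summand of M_r(B) is positive
   semidefinite, so M_r(B) >= r I.  Deleting e turns M_r(A) into the rank-one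
   downdate M = M_r(A) - a w w^T with w = D^{-1/2}(e_i - e_j).  By Sherman-Morrison,
   p := M^-1 w = (1 + a t) M_r(A)^-1 w where t = w^T p = p^T M p >= r |p|^2, hence
   c_r(e) = a |p|^2 / (1 + a t) <= a t / (r (1 + a t)) < 1/r. *)

Lemma rank_one_ratio_le (R : realFieldType) (a r s t : R) :
  0 <= a -> 0 < r -> 0 <= s -> r * ((1 + a * t) ^+ 2 * s) <= t ->
  a * ((1 + a * t) * s) <= r^-1.
Proof.
move=> a0 r0 s0 hrt.
have t0 : 0 <= t.
  by apply: le_trans hrt; apply: mulr_ge0; [exact: ltW | exact: mulr_ge0 (sqr_ge0 _) s0].
have hat : 0 < 1 + a * t by rewrite ltr_pwDl // mulr_ge0.
rewrite -(ler_pM2l r0) mulfV ?gt_eqF // -(ler_pM2l hat) mulr1.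
by have := ler_wpM2l a0 hrt; nra.
Qed.

Section Coercive.
Variable R : realFieldType.

Section Quadratic.
Variable m : nat.
Implicit Type x : 'cV[R]_m.

Lemma mulmx_trself_sum x : (x^T *m x) 0 0 = \sum_k x k 0 ^+ 2.
Proof. by rewrite mxE; apply: eq_bigr => k _; rewrite !mxE expr2. Qed.

Lemma mulmx_trself_ge0 x : 0 <= (x^T *m x) 0 0.
Proof. by rewrite mulmx_trself_sum sumr_ge0 // => k _; rewrite sqr_ge0. Qed.

Lemma mulmx_trself_eq0 x : ((x^T *m x) 0 0 == 0) = (x == 0).
Proof.
apply/idP/eqP => [|->]; last by rewrite mulmx0 mxE.
rewrite mulmx_trself_sum psumr_eq0 => [/allP x0|k _]; last exact: sqr_ge0.
apply/matrixP => k l; rewrite ord1 mxE; apply/eqP.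
by rewrite -sqrf_eq0; apply: (implyP (x0 k _)); rewrite ?mem_index_enum.
Qed.

Lemma quad_form_le_row_sums (B : 'M[R]_m) x :
  B^T = B -> (forall k l, 0 <= B k l) ->
  (x^T *m B *m x) 0 0 <= \sum_k (\sum_l B k l) * x k 0 ^+ 2.
Proof.
move=> B_sym B_ge0.
have B_symE k l : B l k = B k l by rewrite -{1}B_sym mxE.
have -> : (x^T *m B *m x) 0 0 = \sum_k \sum_l x k 0 * B k l * x l 0.
  rewrite mxE; under eq_bigr do rewrite mxE mulr_suml.
  by rewrite exchange_big; apply: eq_bigr => k _; apply: eq_bigr => l _; rewrite !mxE.
set Q := \sum_k _; set S := \sum_k _.
have S_swap : \sum_k \sum_l B k l * x l 0 ^+ 2 = S.
  rewrite exchange_big; apply: eq_bigr => l _; rewrite mulr_suml.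
  by apply: eq_bigr => k _; rewrite B_symE.
have : 0 <= \sum_k \sum_l B k l * (x k 0 - x l 0) ^+ 2.
  by do 2![apply: sumr_ge0 => ? _]; rewrite mulr_ge0 ?sqr_ge0.
have -> : \sum_k \sum_l B k l * (x k 0 - x l 0) ^+ 2 =
    S + \sum_k \sum_l B k l * x l 0 ^+ 2 - 2 * Q.
  rewrite /S /Q mulr_sumr -big_split -sumrB; apply: eq_bigr => k _.
  rewrite mulr_suml mulr_sumr -big_split -sumrB; apply: eq_bigr => l _; rewrite /=; ring.
rewrite S_swap; lra.
Qed.

End Quadratic.

Variable n : nat.
Implicit Types (M : 'M[R]_n) (x w : 'cV[R]_n).

Definition coercive (r : R) M :=
  forall x, r * (x^T *m x) 0 0 <= (x^T *m M *m x) 0 0.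

Lemma coercive_unitmx r M : 0 < r -> coercive r M -> M \in unitmx.
Proof.
move=> r0 rM; rewrite -unitmx_tr -row_free_unit -kermx_eq0.
apply/eqP/row_matrixP => k; rewrite row0.
set x := (row k (kermx M^T))^T.
have Mx0 : M *m x = 0.
  by rewrite -[M]trmxK -trmx_mul -row_mul mulmx_ker row0 trmx0.
have := rM x; rewrite -mulmxA Mx0 mulmx0 [X in _ <= X]mxE pmulr_rle0 // => x_le0.
have : x == 0 by rewrite -mulmx_trself_eq0 eq_le x_le0 mulmx_trself_ge0.
by rewrite -[row _ _]trmxK -/x => /eqP ->; rewrite trmx0.
Qed.

Lemma coercive_rank_one_update r M w a : 0 <= a ->
  coercive r M -> coercive r (M + a *: (w *m w^T)).
Proof.
move=> a0 rM x; rewrite mulmxDr mulmxDl [X in _ <= X]mxE; apply: ler_wpDr (rM x).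
rewrite -scalemxAr -scalemxAl mxE mulr_ge0 //.
have -> : x^T *m (w *m w^T) *m x = (w^T *m x)^T *m (w^T *m x).
  by rewrite trmx_mul trmxK !mulmxA.
exact: mulmx_trself_ge0.
Qed.

Section RankOneUpdate.
Variables (M : 'M[R]_n) (w : 'cV[R]_n) (a : R).
Let N := M + a *: (w *m w^T).
Hypotheses (M_sym : M^T = M) (uM : M \in unitmx) (uN : N \in unitmx).

Lemma tr_invmx_rank_one_update :
  \tr (invmx M) - \tr (invmx N) = a * ((invmx N *m w)^T *m (invmx M *m w)) 0 0.
Proof.
have N_sym : N^T = N by rewrite /N linearD linearZ /= trmx_mul trmxK M_sym.
rewrite -linearB /=.
have -> : invmx M - invmx N = invmx M *m (a *: (w *m w^T)) *m invmx N.
  have -> : a *: (w *m w^T) = N - M by rewrite /N addrC addKr.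
  by rewrite mulmxBr mulmxBl mulVmx // mul1mx -mulmxA mulmxV // mulmx1.
rewrite -scalemxAr -scalemxAl mxtraceZ; congr (_ * _).
rewrite mxtrace_mulC !mulmxA (mxtrace_mulC _ w^T) trace_mx11.
by rewrite trmx_mul trmx_inv N_sym !mulmxA.
Qed.

Lemma invmx_rank_one_update_mul :
  invmx M *m w = (1 + a * (w^T *m invmx M *m w) 0 0) *: (invmx N *m w).
Proof.
have NMw : N *m (invmx M *m w) = (1 + a * (w^T *m invmx M *m w) 0 0) *: w.
  rewrite /N mulmxDl mulmxA mulmxV // mul1mx -scalemxAl -mulmxA [w^T *m _]mulmxA.
  by rewrite [X in w *m X]mx11_scalar mul_mx_scalar scalerA scalerDl scale1r.
by rewrite (scalemxAr _ (invmx N) w) -NMw mulmxA mulVmx // mul1mx.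
Qed.

End RankOneUpdate.

Lemma tr_invmx_rank_one_update_le (M : 'M[R]_n) w a r :
  0 <= a -> 0 < r -> M^T = M -> coercive r M ->
  \tr (invmx M) - \tr (invmx (M + a *: (w *m w^T))) <= r^-1.
Proof.
move=> a0 r0 M_sym rM.
have uM := coercive_unitmx r0 rM.
have uN := coercive_unitmx r0 (coercive_rank_one_update w a0 rM).
rewrite tr_invmx_rank_one_update //.
have := invmx_rank_one_update_mul uM uN.
set p := invmx M *m w; set q := invmx _ *m w; set t := (w^T *m _ *m w) 0 0 => p_q.
have t_quad : t = (p^T *m M *m p) 0 0.
  by rewrite /p trmx_mul trmx_inv M_sym -!mulmxA mulKVmx // !mulmxA.
have qp : (q^T *m p) 0 0 = (1 + a * t) * (q^T *m q) 0 0.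
  by rewrite p_q -scalemxAr [LHS]mxE.
have pp : (p^T *m p) 0 0 = (1 + a * t) ^+ 2 * (q^T *m q) 0 0.
  by rewrite {1}p_q linearZ /= -scalemxAl [LHS]mxE qp mulrA -expr2.
have := rM p; rewrite -t_quad pp qp.
by apply: rank_one_ratio_le => //; apply: mulmx_trself_ge0.
Qed.

End Coercive.

Section EdgeDeletion.
Variables (R : rcfType) (n : nat) (A : 'M[R]_n) (i j : 'I_n).

Lemma AhatE k l : Ahat A i j k l =
  A k l + A i j * (((k == i)%:R - (k == j)%:R) * ((l == i)%:R - (l == j)%:R)).
Proof. by rewrite !mxE big_ord1 !mxE. Qed.

Lemma trmx_Ahat : A^T = A -> (Ahat A i j)^T = Ahat A i j.
Proof. by move=> A_sym; rewrite linearD linearZ /= trmx_mul trmxK A_sym. Qed.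

Lemma deg_Ahat k : deg (Ahat A i j) k = deg A k.
Proof.
have sum_delta (t : 'I_n) : \sum_l ((l == t)%:R : R) = 1.
  by rewrite (bigD1 t) //= eqxx big1 ?addr0 // => l /negbTE ->.
rewrite /deg; under eq_bigr do rewrite AhatE.
by rewrite big_split /= -mulr_sumr -mulr_sumr sumrB !sum_delta subrr !mulr0 addr0.
Qed.

Lemma Ahat_ge0 : A^T = A -> (forall k l, 0 <= A k l) -> i != j ->
  forall k l, 0 <= Ahat A i j k l.
Proof.
move=> A_sym A_ge0 ij k l; rewrite AhatE.
have Aji : A j i = A i j by rewrite -{1}A_sym mxE.
have ji : j != i by rewrite eq_sym.
have := A_ge0 k l; have := A_ge0 i j.
have [->|ki] := eqVneq k i; last have [->|kj] := eqVneq k j.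
all: have [->|li] := eqVneq l i; last have [->|lj] := eqVneq l j.
all: rewrite ?eqxx ?(negbTE ij) ?(negbTE ji) ?(negbTE ki) ?(negbTE kj)
  ?(negbTE li) ?(negbTE lj) ?Aji /=; nra.
Qed.

End EdgeDeletion.

Section RegularizedMatrix.
Variables (R : rcfType) (n : nat) (A : 'M[R]_n).
Hypothesis deg_gt0 : forall k, 0 < deg A k.

Local Notation Dmh := (diagf (fun k => (Num.sqrt (deg A k))^-1)).
Local Notation Dh := (diagf (fun k => Num.sqrt (deg A k))).

Definition Kr_mx (r : R) (B : 'M[R]_n) : 'M[R]_n :=
  (1 + r)%:M - Dmh *m B *m Dmh + (vol A)^-1 *: (Dh *m ones R n *m (ones R n)^T *m Dh).

Lemma KrE r B : Kr A r B = \tr (invmx (Kr_mx r B)) - (1 + r)^-1.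
Proof. by []. Qed.

Lemma trmx_diagf (f : 'I_n -> R) : (diagf f)^T = diagf f.
Proof. exact: tr_diag_mx. Qed.

Lemma Kr_mxE r B : Kr_mx r B = (1 + r)%:M - Dmh *m B *m Dmh
  + (vol A)^-1 *: ((Dh *m ones R n) *m (Dh *m ones R n)^T).
Proof. by rewrite /Kr_mx trmx_mul trmx_diagf !mulmxA. Qed.

Lemma trmx_Kr_mx r B : B^T = B -> (Kr_mx r B)^T = Kr_mx r B.
Proof.
move=> B_sym; rewrite Kr_mxE linearD linearB linearZ /= tr_scalar_mx.
by rewrite !trmx_mul !trmxK !trmx_diagf B_sym !mulmxA.
Qed.

Lemma normalized_quad_le B (x : 'cV[R]_n) : B^T = B -> (forall k l, 0 <= B k l) ->
  (forall k, deg B k = deg A k) ->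
  (x^T *m (Dmh *m B *m Dmh) *m x) 0 0 <= (x^T *m x) 0 0.
Proof.
move=> B_sym B_ge0 degB.
have -> : x^T *m (Dmh *m B *m Dmh) *m x = (Dmh *m x)^T *m B *m (Dmh *m x).
  by rewrite trmx_mul trmx_diagf !mulmxA.
apply: le_trans (quad_form_le_row_sums _ B_sym B_ge0) _.
rewrite mulmx_trself_sum le_eqVlt; apply/orP; left; apply/eqP.
apply: eq_bigr => k _; rewrite [\sum_l _]degB /diagf mul_diag_mx !mxE.
have dk := deg_gt0 k.
have sk : Num.sqrt (deg A k) != 0 by rewrite gt_eqF // sqrtr_gt0.
by rewrite -{1}(sqr_sqrtr (ltW dk)); field.
Qed.

Lemma coercive_Kr_mx r B : 0 < r -> B^T = B -> (forall k l, 0 <= B k l) ->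
  (forall k, deg B k = deg A k) -> coercive r (Kr_mx r B).
Proof.
move=> r0 B_sym B_ge0 degB; rewrite Kr_mxE.
apply: coercive_rank_one_update.
  by rewrite invr_ge0 sumr_ge0 // => k _; apply: ltW.
move=> x; rewrite mulmxBr mulmxBl [X in _ <= X]mxE mul_mx_scalar -scalemxAl.
have := normalized_quad_le x B_sym B_ge0 degB.
rewrite [X in X + _]mxE [X in _ + X]mxE; lra.
Qed.

Lemma Kr_mx_Ahat r (i j : 'I_n) : Kr_mx r A =
  Kr_mx r (Ahat A i j) + A i j *: (Dmh *m evec R i j *m (Dmh *m evec R i j)^T).
Proof.
rewrite /Kr_mx /Ahat trmx_mul trmx_diagf mulmxDr mulmxDl -scalemxAr -scalemxAl !mulmxA.
by set S := A i j *: _; rewrite opprD addrA [_ - S + _]addrAC subrK.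
Qed.

End RegularizedMatrix.

Theorem theorem10 (R : rcfType) (n : nat) (A : 'M[R]_n) (i j : 'I_n) :
  symmetric_nonneg A ->
  connected_graph A ->
  (forall k, 0 < deg A k) ->
  i != j -> 0 < A i j ->
  cut_edge A i j ->
  forall r : R, 0 < r -> cr A r i j <= r^-1.
Proof.
move=> [A_sym A_ge0] _ deg_gt0 ij aij _ r r0.
have Ahat_sym := trmx_Ahat i j A_sym.
have rK : coercive r (Kr_mx A r (Ahat A i j)).
  by apply: coercive_Kr_mx => //; [exact: Ahat_ge0 | exact: deg_Ahat].
rewrite /cr !KrE opprB addrA subrK (Kr_mx_Ahat A r i j).
exact: tr_invmx_rank_one_update_le (ltW aij) r0 (trmx_Kr_mx _ _ Ahat_sym) rK.
Qed.
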